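(* Let $G$ be the automorphism group of $(\mathbb{Q},<)$ and let $f \in G$. Then there do NOT exist $g, g_1, g_2 \in G$ such that $g$ is a restriction of $f$, $g_1$ is a bump which is an orbital of $g$, $g = g_1 g_2$, and $g$ is conjugate in $G$ to $g_2$, if and only if $f$ has only finitely many non-trivial orbitals.
   Context: For $f \in G$, an orbital of $f$ is an equivalence class of $\mathbb{Q}$ under $a \sim b$ iff there are integers $m,n$ with $f^m a \le b \le f^n a$; it is non-trivial if it has more than one point. The support of an element of $G$ is the set of points it moves. A bump is a non-identity element of $G$ with exactly one non-trivial orbital. An element $g$ is a restriction of $f$ if the support of $g$ is contained in that of $f$ and $g$ agrees with $f$ on the support of $g$. An element $g_1$ is an orbital of $g$ if $g_1$ is a bump whose support is contained in that of $g$ and $g_1$ agrees with $g$ on its support. *)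

From Stdlib Require Import ClassicalEpsilon.
From mathcomp Require Import all_boot all_order all_algebra.
From mathcomp Require Import boolp classical_sets cardinality.

Set Implicit Arguments.
Unset Strict Implicit.
Unset Printing Implicit Defensive.
Import Order.TTheory GRing.Theory Num.Theory.
Local Open Scope ring_scope.
Local Open Scope classical_set_scope.

Definition inG (f : rat -> rat) : Prop :=
  (forall x y : rat, x < y -> f x < f y) /\ (forall y : rat, exists x, f x = y).

(* The inverse of f (meaningful when f is a bijection). *)
Definition finv (f : rat -> rat) (y : rat) : rat :=
  epsilon (inhabits 0) (fun x => f x = y).

Definition powz (f : rat -> rat) (m : int) : rat -> rat :=
  match m with
  | Posz n => iter n f
  | Negz n => iter n.+1 (finv f)
  end.

Definition orb_rel (f : rat -> rat) (a b : rat) : Prop :=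
  exists m n : int, powz f m a <= b /\ b <= powz f n a.

Definition orbital (f : rat -> rat) (a : rat) : set rat := [set b | orb_rel f a b].

Definition nontrivial (O : set rat) : Prop := exists b c, O b /\ O c /\ b <> c.

Definition nontrivial_orbitals (f : rat -> rat) : set (set rat) :=
  [set O | exists a, O = orbital f a /\ nontrivial O].

Definition support (f : rat -> rat) : set rat := [set x | f x <> x].

Definition is_bump (g : rat -> rat) : Prop :=
  inG g /\ (exists x, g x <> x) /\
  exists O, nontrivial_orbitals g O /\ forall O', nontrivial_orbitals g O' -> O' = O.

Definition restriction (g f : rat -> rat) : Prop :=
  support g `<=` support f /\ forall x, support g x -> g x = f x.

Definition orbital_of (g1 g : rat -> rat) : Prop :=
  is_bump g1 /\ support g1 `<=` support g /\ forall x, support g1 x -> g1 x = g x.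

Definition conjugate_in_G (g g2 : rat -> rat) : Prop :=
  exists h, inG h /\ g \o h = h \o g2.

(* If g = g1 g2 where the bump g1 is an orbital of g, then the non-trivial
   orbitals of g2 are those of g except the one supporting g1, while conjugation
   by h maps the orbitals of g2 bijectively onto those of g; so g, and hence f
   of which g is a restriction, has infinitely many non-trivial orbitals.
   Conversely, by Ramsey's theorem infinitely many orbitals of f contain a
   monotone sequence O_0 < O_1 < ... (increasing after replacing f by
   x |-> - f (- x) if needed), and by passing to a subsequence all O_i move
   points in the same direction and have ends of the same kind (a greatest
   strict lower bound or not, a least strict upper bound or not).  Take g, g1
   and g2 to be f restricted to the odd orbitals O_1, O_3, ..., to O_1, and to
   O_3, O_5, ...  A conjugator h with g h = h g2 maps O_(2i+3) onto O_(2i+1)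
   commuting with f (orbitals moving the same way are conjugate, piecewise
   linearly on fundamental domains), each gap between consecutive odd orbitals
   onto the corresponding gap (two convex subsets of Q with at least two
   points are order-isomorphic as soon as they agree on having a least and a
   greatest element; the even orbitals make the gaps large), and is the
   identity above all of them. *)

From Stdlib Require Import ClassicalEpsilon.
From mathcomp Require Import all_boot all_order all_algebra.
From mathcomp Require Import finmap boolp classical_sets functions cardinality.
From mathcomp Require Import lra zify.
(* Imported last, so that [finv] is [Defs.finv] and not [fingraph.finv]. *)
From Pilot Require Import Defs.

Set Implicit Arguments.
Unset Strict Implicit.
Unset Printing Implicit Defensive.
Import Order.TTheory GRing.Theory Num.Theory.
Local Open Scope ring_scope.
Local Open Scope classical_set_scope.

Definition bump_decomposable (f : rat -> rat) : Prop :=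
  exists g g1 g2 : rat -> rat,
    [/\ inG g, inG g1, inG g2, restriction g f &
     [/\ is_bump g1, orbital_of g1 g, g = (fun x => g1 (g2 x)) & conjugate_in_G g g2]].

Definition convex (A : set rat) :=
  forall x y z, A x -> A y -> x <= z -> z <= y -> A z.
Definition below (A B : set rat) := forall x y, A x -> B y -> x < y.
Definition lower (A : set rat) : set rat := [set x | forall y, A y -> x < y].
Definition upper (A : set rat) : set rat := [set x | forall y, A y -> y < x].
Definition hasmin (A : set rat) := exists m, A m /\ forall x, A x -> m <= x.
Definition hasmax (A : set rat) := exists m, A m /\ forall x, A x -> x <= m.
Definition two_points (A : set rat) := exists x y, [/\ A x, A y & x < y].

Section Automorphism.
Variable f : rat -> rat.
Hypothesis hf : inG f.

Lemma inG_lt x y : (f x < f y) = (x < y).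
Proof. by apply: leW_mono; apply: le_mono; case: hf. Qed.

Lemma inG_le x y : (f x <= f y) = (x <= y).
Proof. by apply: le_mono; case: hf. Qed.

Lemma inG_inj : injective f.
Proof. by move=> x y e; apply/eqP; rewrite eq_le -(inG_le x y) -(inG_le y x) e lexx. Qed.

Lemma finvK : cancel (finv f) f.
Proof.
move=> y; apply: (epsilon_spec (inhabits 0) (fun x => f x = y)).
by case: hf => _ /(_ y).
Qed.

Lemma finvKV : cancel f (finv f).
Proof. by move=> x; apply: inG_inj; rewrite finvK. Qed.

Lemma inG_finv : inG (finv f).
Proof.
split=> [x y xy|y]; first by rewrite -inG_lt !finvK.
by exists (f y); rewrite finvKV.
Qed.

End Automorphism.

Lemma inG_comp f g : inG f -> inG g -> inG (f \o g).
Proof.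
move=> hf hg; split=> [x y xy|y] /=; first by rewrite !inG_lt.
by exists (finv g (finv f y)); rewrite /= !finvK.
Qed.

Lemma inG_id : inG id.
Proof. by split=> // y; exists y. Qed.

Lemma inG_powz f m : inG f -> inG (powz f m).
Proof.
move=> hf; have iter_inG n g : inG g -> inG (iter n g).
  by move=> hg; elim: n => [|n IH]; [exact: inG_id | exact: inG_comp].
by case: m => n; apply: iter_inG => //; exact: inG_finv.
Qed.

Section Powers.
Variable f : rat -> rat.
Hypothesis hf : inG f.

Lemma powz1 x : powz f 1 x = f x.
Proof. by []. Qed.

Lemma powzS m x : powz f (m + 1) x = f (powz f m x).
Proof.
case: m => [n|[|n]]; first by have -> : Posz n + 1 = n.+1 by lia.
  by rewrite /= finvK.
have -> : Negz n.+1 + 1 = Negz n by rewrite !NegzE; lia.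
by rewrite /= finvK.
Qed.

Lemma powz_pred m x : powz f (m - 1) x = finv f (powz f m x).
Proof. by rewrite -{2}(subrK 1 m) powzS finvKV. Qed.

Lemma powzD m n x : powz f (m + n) x = powz f m (powz f n x).
Proof.
elim/int_rect: m x => [|k IH|k IH] x; first by rewrite add0r.
  have -> : k.+1%:Z + n = (k%:Z + n) + 1 by lia.
  have -> : k.+1%:Z = k%:Z + 1 by lia.
  by rewrite !powzS IH.
have -> : - k.+1%:Z + n = (- k%:Z + n) - 1 by lia.
have -> : - k.+1%:Z = - k%:Z - 1 by lia.
by rewrite !powz_pred IH.
Qed.

Lemma powzKN m x : powz f m (powz f (- m) x) = x.
Proof. by rewrite -powzD addrN. Qed.

Lemma powz_lt m x y : (powz f m x < powz f m y) = (x < y).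
Proof. exact/inG_lt/inG_powz. Qed.

Lemma powz_le m x y : (powz f m x <= powz f m y) = (x <= y).
Proof. exact/inG_le/inG_powz. Qed.

End Powers.

Lemma powz_conj f1 f2 h m x : inG f1 -> inG f2 ->
  (forall y, f1 (h y) = h (f2 y)) -> powz f1 m (h x) = h (powz f2 m x).
Proof.
move=> hf1 hf2 hc; elim/int_rect: m x => [|k IH|k IH] x //.
  have -> : k.+1%:Z = k%:Z + 1 by lia.
  by rewrite !powzS // IH hc.
have -> : - k.+1%:Z = - k%:Z - 1 by lia.
by rewrite !powz_pred // IH; apply: (inG_inj hf1); rewrite hc !finvK.
Qed.

Lemma powz_fix f m x : inG f -> f x = x -> powz f m x = x.
Proof.
move=> hf fx; elim/int_rect: m => [|k IH|k IH] //.
  have -> : k.+1%:Z = k%:Z + 1 by lia.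
  by rewrite powzS // IH.
have -> : - k.+1%:Z = - k%:Z - 1 by lia.
by rewrite powz_pred // IH -{1}fx finvKV.
Qed.

Section Orbitals.
Variable f : rat -> rat.
Hypothesis hf : inG f.

Lemma orbital_refl a : orbital f a a.
Proof. by exists 0, 0. Qed.

Lemma orbital_powz a k : orbital f a (powz f k a).
Proof. by exists k, k. Qed.

Lemma orbital_f a : orbital f a (f a).
Proof. exact: (orbital_powz a 1). Qed.

Lemma orbital_sym a b : orbital f a b -> orbital f b a.
Proof.
case=> m [n [h1 h2]]; exists (- n), (- m).
by split; [rewrite -(powz_le hf n) | rewrite -(powz_le hf m)]; rewrite powzKN.
Qed.

Lemma orbital_trans a b c : orbital f a b -> orbital f b c -> orbital f a c.
Proof.
case=> m [n [h1 h2]] [m' [n' [h3 h4]]]; exists (m' + m), (n' + n).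
by rewrite !powzD // (le_trans _ h3) ?(le_trans h4) // powz_le.
Qed.

Lemma orbital_eq a b : orbital f a b -> orbital f a = orbital f b.
Proof.
move=> ab; apply/seteqP; split=> x; first exact: orbital_trans (orbital_sym ab).
exact: orbital_trans.
Qed.

Lemma orbital_convex a : convex (orbital f a).
Proof.
move=> x y z [m [_ [h1 _]]] [_ [n [_ h2]]] xz zy.
by exists m, n; split; [exact: le_trans h1 xz | exact: le_trans zy h2].
Qed.

Lemma orbital_fE a x : orbital f a (f x) <-> orbital f a x.
Proof.
split=> ax; last exact: orbital_trans ax (orbital_f x).
by apply: orbital_trans ax _; apply: orbital_sym; exact: orbital_f.
Qed.

Lemma orbital_fix a : f a = a -> orbital f a = [set a].
Proof.
move=> fa; apply/seteqP; split=> [x [m [n]]|x /= ->]; last exact: orbital_refl.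
by rewrite !powz_fix // => -[h1 h2]; apply/eqP; rewrite eq_le h1 h2.
Qed.

Lemma orbital_below a b : orbital f a <> orbital f b -> a < b ->
  below (orbital f a) (orbital f b).
Proof.
move=> ne ab x y ax ay; rewrite ltNge; apply/negP => yx; apply: ne.
case: (leP b x) => [bx|xb].
  apply: orbital_eq; exact: orbital_convex (orbital_refl a) ax (ltW ab) bx.
rewrite (orbital_eq ax); apply/esym/orbital_eq.
exact: orbital_convex ay (orbital_refl b) yx (ltW xb).
Qed.

Lemma orbital_total a b : orbital f a <> orbital f b ->
  below (orbital f a) (orbital f b) \/ below (orbital f b) (orbital f a).
Proof.
move=> ne; case: (ltgtP a b) => [ab|ba|ab]; first by left; exact: orbital_below.
  by right; apply: orbital_below => // /esym.
by case: ne; rewrite ab.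
Qed.

Lemma orbital_support a : support f a -> orbital f a `<=` support f.
Proof.
move=> sa y [m [n [h1 h2]]] fy; apply: sa.
have ay : a <= y by rewrite -(powz_le hf m) (powz_fix m hf fy).
have ya : y <= a by rewrite -(powz_le hf n) (powz_fix n hf fy).
by have -> : a = y by apply/eqP; rewrite eq_le ay ya.
Qed.

Lemma nontrivial_orbitalP a : nontrivial (orbital f a) <-> support f a.
Proof.
split=> [[b [c [ab [ac bc]]]] fa|sa]; first by move: ab ac bc; rewrite orbital_fix //= => -> ->; apply.
by exists a, (f a); do !split; [exact: orbital_refl | exact: orbital_f | move/esym].
Qed.

Lemma nontrivial_orbitalsP O :
  nontrivial_orbitals f O <-> exists2 a, support f a & O = orbital f a.
Proof.
split=> [[a [-> /nontrivial_orbitalP sa]]|[a sa ->]]; first by exists a.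
by exists a; split=> //; exact/nontrivial_orbitalP.
Qed.

End Orbitals.

Section Restriction.
Variables f g : rat -> rat.
Hypotheses (hf : inG f) (hg : inG g) (hgf : restriction g f).

Lemma restriction_step x : support g x ->
  [/\ g x = f x, support g (g x), finv g x = finv f x & support g (finv g x)].
Proof.
case: hgf => _ gf sx; have sgx : support g (g x) by move=> /(inG_inj hg).
have sgVx : support g (finv g x).
  move=> e; apply: sx; have ex : x = finv g x by rewrite -{1}(finvK hg x) e.
  by rewrite {1}ex finvK.
split=> //; first exact: gf.
by apply: (inG_inj hf); rewrite finvK // -gf // finvK.
Qed.

Lemma restriction_powz m a : support g a ->
  powz g m a = powz f m a /\ support g (powz g m a).
Proof.
elim/int_rect: m => [|k IH|k IH] sa //.
  have -> : k.+1%:Z = k%:Z + 1 by lia.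
  have [e s] := IH sa; have [ge sg _ _] := restriction_step s.
  by rewrite !powzS // -e.
have -> : - k.+1%:Z = - k%:Z - 1 by lia.
have [e s] := IH sa; have [_ _ ge sg] := restriction_step s.
by rewrite !powz_pred // -e.
Qed.

Lemma restriction_orbital a : support g a -> orbital g a = orbital f a.
Proof.
move=> sa; have E k := (restriction_powz k sa).1.
by apply/seteqP; split=> x [m [n]]; exists m, n; rewrite ?E // -!E.
Qed.

Lemma nontrivial_orbitals_restriction : nontrivial_orbitals g `<=` nontrivial_orbitals f.
Proof.
move=> O /(nontrivial_orbitalsP hg) [a sa ->]; apply/(nontrivial_orbitalsP hf).
by exists a; [case: hgf => sgf _; exact: sgf | exact: restriction_orbital].
Qed.

End Restriction.

Section Conjugation.
Variables g g2 h : rat -> rat.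
Hypotheses (hg : inG g) (hg2 : inG g2) (hh : inG h) (hc : g \o h = h \o g2).

Let conjE x : g (h x) = h (g2 x).
Proof. by have := congr1 (fun F => F x) hc. Qed.

Lemma conj_orbital a : orbital g (h a) = h @` orbital g2 a.
Proof.
have E m x := powz_conj m x hg hg2 conjE.
apply/seteqP; split=> [y [m [n]]|_ [x [m [n [xm xn]]] <-]]; rewrite ?E.
  by rewrite -{1 2}(finvK hh y) !inG_le // => mn; exists (finv h y); [exists m, n | rewrite finvK].
by exists m, n; rewrite !E !inG_le.
Qed.

Lemma conj_support a : support g (h a) <-> support g2 a.
Proof. by rewrite /support /= conjE; split=> ne e; apply: ne; [rewrite e | exact: (inG_inj hh e)]. Qed.

Lemma nontrivial_orbitals_conj :
  nontrivial_orbitals g = (fun O => h @` O) @` nontrivial_orbitals g2.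
Proof.
apply/seteqP; split=> O.
  move=> /(nontrivial_orbitalsP hg) [a sa ->]; exists (orbital g2 (finv h a)).
    by apply/(nontrivial_orbitalsP hg2); exists (finv h a); rewrite // -conj_support finvK.
  by rewrite -conj_orbital finvK.
case=> _ /(nontrivial_orbitalsP hg2) [a sa ->] <-; apply/(nontrivial_orbitalsP hg).
by exists (h a); [exact/conj_support | rewrite conj_orbital].
Qed.

End Conjugation.

Section Factorization.
Variables g g1 g2 : rat -> rat.
Hypotheses (hg : inG g) (hg1 : inG g1) (hg2 : inG g2) (hg1g : restriction g1 g).
Hypothesis gE : forall x, g x = g1 (g2 x).

Lemma factor_support :
  restriction g2 g /\ support g2 = support g `\` support g1.
Proof.
case: hg1g => _ g1g.
have g2_id x : support g1 x -> g2 x = x by move=> sx; apply: (inG_inj hg1); rewrite -gE g1g.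
have g2_g x : ~ support g1 x -> g2 x = g x.
  move=> nsx; case: (pselect (support g1 (g2 x))) => [s2x|/contrapT g1g2]; last by rewrite gE g1g2.
  have ex : x = g2 x by apply: (inG_inj hg); rewrite gE g1g.
  by case: nsx; rewrite ex.
have disj x : support g2 x -> ~ support g1 x by move=> sx /g2_id.
have supp2 : support g2 = support g `\` support g1.
  apply/seteqP; split=> x; last by case=> sx ns1; rewrite /support /= g2_g.
  by move=> sx; split; [rewrite /support /= -g2_g //; exact: disj | exact: disj].
by split=> //; split=> [|x sx]; [rewrite supp2; exact: subDsetl | rewrite g2_g //; exact: disj].
Qed.

Lemma nontrivial_orbitals_factor O1 : nontrivial_orbitals g1 O1 ->
  (forall O, nontrivial_orbitals g1 O -> O = O1) ->
  nontrivial_orbitals g O1 /\ nontrivial_orbitals g2 = nontrivial_orbitals g `\ O1.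
Proof.
move=> NOg1 NO1; have [hg2g supp2] := factor_support.
split; first exact: nontrivial_orbitals_restriction NOg1.
apply/seteqP; split=> O.
  move=> NOg2O; split; first exact: nontrivial_orbitals_restriction NOg2O.
  move: NOg1 NOg2O => /(nontrivial_orbitalsP hg1) [c sc ->] /(nontrivial_orbitalsP hg2) [a].
  rewrite supp2 => -[_ ns1a] -> e; apply: ns1a; apply: (orbital_support hg1 sc).
  by rewrite -e; exact: orbital_refl.
case=> /(nontrivial_orbitalsP hg) [a sa ->] /= ne.
case: (pselect (support g1 a)) => s1a.
  case: ne; rewrite -(restriction_orbital hg hg1 hg1g s1a); apply: NO1.
  by apply/(nontrivial_orbitalsP hg1); exists a.
have s2a : support g2 a by rewrite supp2.
by apply/(nontrivial_orbitalsP hg2); exists a; rewrite // (restriction_orbital hg hg2 hg2g s2a).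
Qed.

End Factorization.

Lemma image_set_inj (T U : Type) (h : T -> U) :
  injective h -> injective (fun A : set T => h @` A).
Proof.
move=> hi A B e; apply/funext => x.
by rewrite -(image_inj (A := A) hi) -(image_inj (A := B) hi) e.
Qed.

Lemma finite_image_setD1_neq (T : choiceType) (phi : T -> T) (B : set T) b :
  injective phi -> finite_set B -> B b -> phi @` (B `\ b) <> B.
Proof.
move=> phi_inj finB Bb e.
have := congr1 (fun A => #|` fset_set A|%fset) e => /=.
rewrite fset_set_image ?card_imfset //; last exact: finite_setD.
rewrite fset_setD1 //; have := cardfsD1 b (fset_set B).
by rewrite in_fset_set // mem_set //=; lia.
Qed.

Lemma bump_decomposable_infinite f :
  inG f -> bump_decomposable f -> ~ finite_set (nontrivial_orbitals f).
Proof.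
move=> hf [g [g1 [g2 [hg hg1 hg2 hgf [[_ [_ [O1 [NOg1 NO1]]]] [_ g1g] gE [h [hh hc]]]]]]] fin.
have [NOgO1 NOg2] :=
  nontrivial_orbitals_factor hg hg1 hg2 g1g (fun x => congr1 (fun F => F x) gE) NOg1 NO1.
have finNOg := sub_finite_set (nontrivial_orbitals_restriction hf hg hgf) fin.
apply: (finite_image_setD1_neq (image_set_inj (inG_inj hh)) finNOg NOgO1).
by rewrite -NOg2 -(nontrivial_orbitals_conj hg hg2 hh hc).
Qed.

Definition order_iso (A B : set rat) (phi : rat -> rat) :=
  [/\ forall x y, A x -> A y -> x < y -> phi x < phi y,
      forall x, A x -> B (phi x) &
      forall y, B y -> exists2 x, A x & phi x = y].

Lemma eq_order_iso A B A' B' phi psi : order_iso A B phi ->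
  (forall x, A x <-> A' x) -> (forall y, B y <-> B' y) ->
  (forall x, A x -> phi x = psi x) -> order_iso A' B' psi.
Proof.
move=> [mono into onto] eA eB e; split.
- by move=> x y /eA Ax /eA Ay xy; rewrite -!e //; exact: mono.
- by move=> x /eA Ax; rewrite -e //; apply/eB; exact: into.
- by move=> y /eB /onto [x Ax <-]; exists x; [exact/eA | rewrite e].
Qed.

Lemma order_iso_inG phi A B :
  inG phi -> (forall x, A x <-> B (phi x)) -> order_iso A B phi.
Proof.
move=> hphi e; split=> [x y _ _|x /e //|y By]; first by rewrite inG_lt.
by exists (finv phi y); rewrite ?finvK //; apply/e; rewrite finvK.
Qed.

Lemma order_isoT_inG phi : order_iso setT setT phi -> inG phi.
Proof.
case=> mono _ onto; split=> [x y|y]; first exact: mono.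
by have [x _ <-] := onto y I; exists x.
Qed.

Lemma order_iso_inj A B phi x y :
  order_iso A B phi -> A x -> A y -> phi x = phi y -> x = y.
Proof.
case=> mono _ _ Ax Ay e; case: (ltgtP x y) => // [xy|yx].
  by have := mono _ _ Ax Ay xy; rewrite e ltxx.
by have := mono _ _ Ay Ax yx; rewrite e ltxx.
Qed.

Lemma order_iso_setD1 A B phi a :
  order_iso A B phi -> A a -> order_iso (A `\ a) (B `\ phi a) phi.
Proof.
move=> iso Aa; have [mono into onto] := iso; split.
- by move=> x y [Ax _] [Ay _]; exact: mono.
- by move=> x [Ax xa]; split; [exact: into | move=> /(order_iso_inj iso Ax Aa)].
- by move=> y [By yb]; have [x Ax e] := onto y By; exists x => //; split=> // xa; apply: yb; rewrite -e xa.
Qed.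

Lemma order_iso_glue (I : Type) (A B : set rat) (p q : rat -> I) (R : I -> I -> Prop)
    (phi : I -> rat -> rat) :
  (forall x y, A x -> A y -> x < y -> p x <> p y -> R (p x) (p y)) ->
  (forall u v, B u -> B v -> R (q u) (q v) -> u < v) ->
  (forall i, order_iso [set x | A x /\ p x = i] [set y | B y /\ q y = i] (phi i)) ->
  order_iso A B (fun x => phi (p x) x).
Proof.
move=> ordA ordB iso; split.
- move=> x y Ax Ay xy; case: (pselect (p x = p y)) => [e|ne].
    by rewrite -e; have [mono _ _] := iso (p x); apply: mono.
  have [_ into _] := iso (p x); have [_ into' _] := iso (p y).
  have [Bx qx] := into x (conj Ax erefl); have [By qy] := into' y (conj Ay erefl).
  by apply: ordB => //; rewrite qx qy; exact: ordA.
- by move=> x Ax; have [_ into _] := iso (p x); have [] := into x (conj Ax erefl).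
- move=> y By; have [_ _ onto] := iso (q y); have [x [Ax px] e] := onto y (conj By erefl).
  by exists x; rewrite ?px.
Qed.

Definition mirror_set (A : set rat) : set rat := [set x | A (- x)].

Lemma mirror_setK A : mirror_set (mirror_set A) = A.
Proof. by apply/seteqP; split=> x; rewrite /mirror_set /= opprK. Qed.

Lemma order_iso_mirror A B phi :
  order_iso A B phi -> order_iso (mirror_set A) (mirror_set B) (fun x => - phi (- x)).
Proof.
case=> mono into onto; split.
- by move=> x y Ax Ay xy; rewrite ltrN2; apply: mono; rewrite // ltrN2.
- by move=> x Ax; rewrite /mirror_set /= opprK; exact: into.
- by move=> y /onto [x Ax e]; exists (- x); rewrite /mirror_set /= opprK // e opprK.
Qed.

Definition interp (a b c d : rat) (x : rat) : rat := c + (d - c) / (b - a) * (x - a).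

Section Interpolation.
Variables a b c d : rat.
Hypotheses (ab : a < b) (cd : c < d).

Lemma interp_l : interp a b c d a = c.
Proof. by rewrite /interp subrr mulr0 addr0. Qed.

Lemma interp_r : interp a b c d b = d.
Proof. by rewrite /interp mulfVK ?subrKC // subr_eq0 gt_eqF. Qed.

Lemma inG_interp : inG (interp a b c d).
Proof.
have s_gt0 : 0 < (d - c) / (b - a) by rewrite divr_gt0 // subr_gt0.
split=> [x y xy|y]; first by rewrite ltrD2l ltr_pM2l // ltrD2r.
exists (a + (y - c) / ((d - c) / (b - a))).
by rewrite /interp addrAC subrr add0r mulrC divfK ?gt_eqF // addrC subrK.
Qed.

Lemma interp_iso_co :
  order_iso [set x | a <= x < b] [set y | c <= y < d] (interp a b c d).
Proof.
apply: order_iso_inG inG_interp _ => x /=.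
by rewrite -(inG_le inG_interp a x) -(inG_lt inG_interp x b) interp_l interp_r.
Qed.

Lemma interp_iso_cc :
  order_iso [set x | a <= x <= b] [set y | c <= y <= d] (interp a b c d).
Proof.
apply: order_iso_inG inG_interp _ => x /=.
by rewrite -(inG_le inG_interp a x) -(inG_le inG_interp x b) interp_l interp_r.
Qed.

End Interpolation.

Definition seq_index (u : nat -> rat) (x : rat) : nat :=
  epsilon (inhabits 0%N) (fun n => u n <= x < u n.+1).

Section IncreasingSequence.
Variable u : nat -> rat.
Hypothesis u_incr : forall n, u n < u n.+1.

Let u_le : {homo u : m n / (m <= n)%N >-> m <= n}.
Proof. exact: homo_leq le_trans (fun n => ltW (u_incr n)). Qed.

Lemma seq_index_uniq n m x : u n <= x < u n.+1 -> u m <= x < u m.+1 -> n = m.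
Proof.
move=> /andP[nx xn] /andP[mx xm]; case: (ltngtP n m) => // [nm|mn].
  by have := u_le nm; rewrite leNgt (le_lt_trans mx xn).
by have := u_le mn; rewrite leNgt (le_lt_trans nx xm).
Qed.

Lemma seq_indexP x : u 0%N <= x -> (exists N, x < u N) ->
  u (seq_index u x) <= x < u (seq_index u x).+1.
Proof.
move=> u0x exN; apply: (epsilon_spec (inhabits 0%N) (fun n => u n <= x < u n.+1)).
have [[|n] xn minN] := find_ex_minn exN; first by move: xn; rewrite ltNge u0x.
by exists n; rewrite xn andbT leNgt; apply/negP => /minN; rewrite ltnn.
Qed.

Lemma seq_index_eq n x : u n <= x < u n.+1 -> seq_index u x = n.
Proof.
move=> hx; have /andP[nx xn] := hx; apply: seq_index_uniq hx.
by apply: seq_indexP; [exact: le_trans (u_le (leq0n n)) nx | exists n.+1].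
Qed.

Lemma seq_index_piece (A : set rat) n x : convex A -> (forall k, A (u k)) ->
  (forall y, A y -> u 0%N <= y) -> (forall y, A y -> exists N, y < u N) ->
  A x /\ seq_index u x = n <-> u n <= x < u n.+1.
Proof.
move=> cA Au lbA cofA; split=> [[Ax <-]|/[dup] /seq_index_eq -> /andP[nx xn]].
  by apply: seq_indexP; [exact: lbA | exact: cofA].
by split=> //; apply: cA (Au n) (Au n.+1) nx (ltW xn).
Qed.

Lemma seq_index_lt A x y :
  (forall z, A z -> u 0%N <= z) -> (forall z, A z -> exists N, z < u N) ->
  A x -> A y -> x < y -> seq_index u x <> seq_index u y -> (seq_index u x < seq_index u y)%N.
Proof.
move=> lbA cofA Ax Ay xy ne; rewrite ltn_neqAle; apply/andP; split; first exact/eqP.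
have /andP[ix _] := seq_indexP (lbA _ Ax) (cofA _ Ax).
have /andP[_ yi] := seq_indexP (lbA _ Ay) (cofA _ Ay).
rewrite leqNgt; apply/negP => /u_le lt_ixy.
by have := lt_le_trans yi (le_trans lt_ixy ix); rewrite ltNge (ltW xy).
Qed.

Lemma lt_seq_index A x y :
  (forall z, A z -> u 0%N <= z) -> (forall z, A z -> exists N, z < u N) ->
  A x -> A y -> (seq_index u x < seq_index u y)%N -> x < y.
Proof.
move=> lbA cofA Ax Ay /u_le lt_ixy.
have /andP[_ xi] := seq_indexP (lbA _ Ax) (cofA _ Ax).
have /andP[iy _] := seq_indexP (lbA _ Ay) (cofA _ Ay).
exact: lt_le_trans xi (le_trans lt_ixy iy).
Qed.

End IncreasingSequence.

Lemma not_hasmax (A : set rat) : ~ hasmax A -> forall x, A x -> exists2 y, A y & x < y.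
Proof.
move=> nmax x Ax; apply: contrapT => nlt; apply: nmax; exists x; split=> // y Ay.
by rewrite leNgt; apply/negP => xy; apply: nlt; exists y.
Qed.

Lemma cofinal_seq (A : set rat) a : A a -> (forall x, A x -> exists2 y, A y & x < y) ->
  exists u : nat -> rat, [/\ u 0%N = a, forall n, A (u n), forall n, u n < u n.+1 &
    forall x, A x -> exists N, x < u N].
Proof.
move=> Aa nmax; pose q n : rat := odflt 0 (choice.unpickle n).
(* Step [n] also overtakes the [n]-th rational if it lies in [A]; hence [u] is cofinal. *)
pose P n x y := [/\ A y, x < y & A (q n) -> q n < y].
pose next n x := epsilon (inhabits 0) (P n x).
have nextP n x : A x -> P n x (next n x).
  move=> Ax; apply: (epsilon_spec (inhabits 0) (P n x)).
  case: (pselect (A (q n))) => [Aq|nAq]; last by have [y Ay xy] := nmax x Ax; exists y.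
  case: (leP (q n) x) => [qx|xq].
    by have [y Ay xy] := nmax x Ax; exists y; split=> // _; exact: le_lt_trans qx xy.
  by have [y Ay qy] := nmax _ Aq; exists y; split=> //; exact: lt_trans xq qy.
pose u := fix u n := if n is k.+1 then next k (u k) else a.
have Au n : A (u n) by elim: n => //= n IH; have [] := nextP n _ IH.
exists u; split=> // [n|x Ax]; first by have [] := nextP n _ (Au n).
exists (choice.pickle x).+1; have [_ _] := nextP (choice.pickle x) _ (Au (choice.pickle x)).
by rewrite /q choice.pickleK /=; apply.
Qed.

Lemma order_iso_halfline (A B : set rat) a b : convex A -> convex B -> A a -> B b ->
  (forall x, A x -> a <= x) -> (forall y, B y -> b <= y) ->
  (exists2 x, A x & a < x) -> (exists2 y, B y & b < y) ->
  (hasmax A <-> hasmax B) -> exists phi, order_iso A B phi /\ phi a = b.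
Proof.
move=> cA cB Aa Bb lbA lbB [x1 Ax1 ax1] [y1 By1 by1] maxAB.
case: (pselect (hasmax A)) => [maxA|nmaxA].
  have [[m [Am mA]] [m' [Bm' m'B]]] := (maxA, maxAB.1 maxA).
  have am : a < m := lt_le_trans ax1 (mA _ Ax1).
  have bm' : b < m' := lt_le_trans by1 (m'B _ By1).
  exists (interp a m b m'); split; last exact: interp_l.
  apply: eq_order_iso (interp_iso_cc am bm') _ _ _ => // [x|y] /=.
    by split=> [/andP[ax xm]|Ax]; [exact: cA ax xm | rewrite lbA // mA].
  by split=> [/andP[dy ym']|By]; [exact: cB dy ym' | rewrite lbB // m'B].
have nmaxB : ~ hasmax B by move=> /maxAB.
have [u [u0 Au ui cofA]] := cofinal_seq Aa (not_hasmax nmaxA).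
have [v [v0 Bv vi cofB]] := cofinal_seq Bb (not_hasmax nmaxB).
rewrite -u0 in lbA; rewrite -v0 in lbB.
exists (fun x => interp (u (seq_index u x)) (u (seq_index u x).+1)
                        (v (seq_index u x)) (v (seq_index u x).+1) x); split; last first.
  by rewrite -u0 (seq_index_eq ui (n := 0%N)) ?interp_l ?lexx ?ui.
apply: (order_iso_glue (R := fun i j => (i < j)%N) (p := seq_index u) (q := seq_index v)
  (phi := fun n => interp (u n) (u n.+1) (v n) (v n.+1))) => [x y Ax Ay|x y Bx By|n].
- exact: (seq_index_lt ui lbA cofA Ax Ay).
- exact: (lt_seq_index vi lbB cofB Bx By).
apply: eq_order_iso (interp_iso_co (ui n) (vi n)) _ _ _ => // [x|y]; apply: iff_sym.
  exact: (seq_index_piece ui n x cA Au lbA cofA).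
exact: (seq_index_piece vi n y cB Bv lbB cofB).
Qed.

Lemma convex_ge (C : set rat) c : convex C -> convex [set x | C x /\ c <= x].
Proof. by move=> cC x y z [Cx cx] [Cy _] xz zy; split; [exact: cC xz zy | exact: le_trans xz]. Qed.

Lemma hasmax_ge (C : set rat) c c1 : C c1 -> c < c1 ->
  hasmax [set x | C x /\ c <= x] <-> hasmax C.
Proof.
move=> Cc1 cc1; split=> [[m [[Cm cm] mC]]|[m [Cm mC]]].
  exists m; split=> // x Cx; case: (leP c x) => [cx|xc]; first exact: mC.
  exact: ltW (lt_le_trans xc cm).
by exists m; split=> [|x [Cx _]]; [split=> //; exact: ltW (lt_le_trans cc1 (mC _ Cc1)) | exact: mC].
Qed.

Lemma convex_mirror (C : set rat) : convex C -> convex (mirror_set C).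
Proof. by move=> cC x y z Cx Cy xz zy; apply: cC Cy Cx _ _; rewrite lerN2. Qed.

Lemma hasmax_mirror (C : set rat) : hasmax (mirror_set C) <-> hasmin C.
Proof.
split=> [[m [Cm mC]]|[m [Cm mC]]]; exists (- m); split=> //.
- by move=> x Cx; rewrite lerNl; apply: mC; rewrite /mirror_set /= opprK.
- by rewrite /mirror_set /= opprK.
- by move=> x Cx; rewrite lerNr; exact: mC.
Qed.

Lemma mirror_ge_setD1 (C : set rat) c :
  mirror_set [set x | mirror_set C x /\ - c <= x] `\ c = [set x | C x /\ x < c].
Proof.
apply/seteqP; split=> x; rewrite /mirror_set /= opprK lerN2 lt_neqAle.
  by case=> -[Cx xc] /eqP ne; rewrite ne.
by case=> Cx /andP[/eqP ne xc].
Qed.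

Section ConvexIso.
Variables (C D : set rat) (c d : rat).
Hypotheses (cC : convex C) (cD : convex D) (Cc : C c) (Dd : D d).

Lemma order_iso_upper : (exists2 x, C x & c < x) -> (exists2 y, D y & d < y) ->
  (hasmax C <-> hasmax D) ->
  exists phi, order_iso [set x | C x /\ c <= x] [set y | D y /\ d <= y] phi /\ phi c = d.
Proof.
move=> [c1 Cc1 cc1] [d1 Dd1 dd1] maxCD.
apply: order_iso_halfline.
- exact: convex_ge.
- exact: convex_ge.
- by split.
- by split.
- by move=> x [].
- by move=> y [].
- by exists c1 => //; split=> //; exact: ltW.
- by exists d1 => //; split=> //; exact: ltW.
- by rewrite (hasmax_ge Cc1 cc1) (hasmax_ge Dd1 dd1).
Qed.

Lemma order_iso_lower : (exists2 x, C x & x < c) -> (exists2 y, D y & y < d) ->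
  (hasmin C <-> hasmin D) ->
  exists phi, order_iso [set x | C x /\ x < c] [set y | D y /\ y < d] phi.
Proof.
move=> [c0 Cc0 c0c] [d0 Dd0 d0d] minCD.
have [phi [iso phic]] : exists phi, order_iso [set x | mirror_set C x /\ - c <= x]
    [set y | mirror_set D y /\ - d <= y] phi /\ phi (- c) = - d.
  have mCc0 : mirror_set C (- c0) by rewrite /mirror_set /= opprK.
  have mDd0 : mirror_set D (- d0) by rewrite /mirror_set /= opprK.
  have c0c' : - c < - c0 by rewrite ltrN2.
  have d0d' : - d < - d0 by rewrite ltrN2.
  apply: order_iso_halfline.
  - by apply: convex_ge; exact: convex_mirror.
  - by apply: convex_ge; exact: convex_mirror.
  - by rewrite /mirror_set /= opprK.
  - by rewrite /mirror_set /= opprK.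
  - by move=> x [].
  - by move=> y [].
  - by exists (- c0) => //; split=> //; exact: ltW.
  - by exists (- d0) => //; split=> //; exact: ltW.
  - by rewrite (hasmax_ge mCc0 c0c') (hasmax_ge mDd0 d0d') !hasmax_mirror.
have Cc' : mirror_set [set x | mirror_set C x /\ - c <= x] c by rewrite /mirror_set /= opprK.
have := order_iso_setD1 (order_iso_mirror iso) Cc'.
by rewrite /= phic opprK !mirror_ge_setD1; exists (fun x => - phi (- x)).
Qed.

End ConvexIso.

Lemma two_points_mid (C : set rat) : convex C -> two_points C ->
  exists c, [/\ C c, exists2 x, C x & x < c & exists2 x, C x & c < x].
Proof.
move=> cC [c0 [c1 [Cc0 Cc1 c01]]]; exists ((c0 + c1) / 2).
have [c0c cc1] : c0 < (c0 + c1) / 2 /\ (c0 + c1) / 2 < c1 by split; lra.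
by split; [apply: cC Cc0 Cc1 _ _; exact: ltW | exists c0 | exists c1].
Qed.

Lemma convex_order_iso (C D : set rat) : convex C -> convex D ->
  two_points C -> two_points D -> (hasmin C <-> hasmin D) -> (hasmax C <-> hasmax D) ->
  exists phi, order_iso C D phi.
Proof.
move=> cC cD /(two_points_mid cC) [c [Cc lo_c hi_c]] /(two_points_mid cD) [d [Dd lo_d hi_d]].
move=> minCD maxCD; have [phiU [isoU _]] := order_iso_upper cC cD Cc Dd hi_c hi_d maxCD.
have [phiL isoL] := order_iso_lower cC cD Cc Dd lo_c lo_d minCD.
eexists; apply: (order_iso_glue (p := fun x => x < c) (q := fun y => y < d)
  (R := fun i j => i && ~~ j) (phi := fun b => if b then phiL else phiU)).
- move=> x y _ _ xy; case: (ltP x c) => [xc|cx] ne; first by apply/negP => yc; apply: ne; rewrite yc.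
  by case: ne; rewrite ltNge (le_trans cx (ltW xy)).
- by move=> u v _ _ /andP[ud]; rewrite -leNgt; exact: lt_le_trans.
have geE (A : set rat) a x : A x /\ (x < a) = false <-> A x /\ a <= x.
  by rewrite leNgt; split=> -[Ax xa]; split=> //; [exact/negbT | exact/negbTE].
case; first by apply: eq_order_iso isoL _ _ _.
by apply: eq_order_iso isoU _ _ _ => // x; apply: iff_sym; apply: geE.
Qed.

Definition fdom (f : rat -> rat) (a : rat) (k : int) : set rat :=
  [set x | powz f k a <= x < powz f (k + 1) a].

Definition fdom_index (f : rat -> rat) (a x : rat) : int :=
  epsilon (inhabits 0) (fun k => fdom f a k x).

Section FundamentalDomains.
Variables (f : rat -> rat) (a : rat).
Hypotheses (hf : inG f) (af : a < f a).

Lemma powz_incr k : powz f k a < powz f (k + 1) a.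
Proof. by rewrite powzD // powz1 powz_lt. Qed.

Lemma powz_mono j k : j <= k -> powz f j a <= powz f k a.
Proof.
move=> jk; have [n ->] : exists n : nat, k = j + n by exists `|k - j|%N; lia.
elim: n => [|n IH]; first by rewrite addr0.
have -> : j + n.+1%:Z = (j + n) + 1 by lia.
exact: le_trans IH (ltW (powz_incr _)).
Qed.

Lemma fdom_uniq j k x : fdom f a j x -> fdom f a k x -> j = k.
Proof.
move=> /andP[jx xj] /andP[kx xk]; case: (ltgtP j k) => // [jk|kj].
  have jk1 : j + 1 <= k by lia.
  by have := powz_mono jk1; rewrite leNgt (le_lt_trans kx xj).
have kj1 : k + 1 <= j by lia.
by have := powz_mono kj1; rewrite leNgt (le_lt_trans jx xk).
Qed.

Lemma fdom_exists x : orbital f a x -> exists k, fdom f a k x.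
Proof.
case=> m [n [mx xn]]; pose u (N : nat) := powz f (m + N%:Z) a.
have ui N : u N < u N.+1.
  by rewrite /u (_ : m + N.+1%:Z = (m + N) + 1); [exact: powz_incr | lia].
have [N /andP[uN Nu]] : exists N, u N <= x < u N.+1.
  exists (seq_index u x); apply: seq_indexP => //; first by rewrite /u addr0.
  exists `|(n + 1 - m)%R|%N; apply: le_lt_trans xn (lt_le_trans (powz_incr n) (powz_mono _)); lia.
by exists (m + N); rewrite /fdom /= uN (_ : m + N%:Z + 1 = m + N.+1%:Z) //; lia.
Qed.

Lemma fdom_orbital k : fdom f a k `<=` orbital f a.
Proof. by move=> x /andP[kx xk]; exists k, (k + 1); split=> //; exact: ltW. Qed.

Lemma fdom_indexP x : orbital f a x -> fdom f a (fdom_index f a x) x.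
Proof. by move=> ax; apply: (epsilon_spec (inhabits 0) (fun k => fdom f a k x)); exact: fdom_exists. Qed.

Lemma fdom_index_eq k x : fdom f a k x -> fdom_index f a x = k.
Proof. by move=> kx; apply: fdom_uniq (fdom_indexP (fdom_orbital kx)) kx. Qed.

Lemma fdom_piece k x : orbital f a x /\ fdom_index f a x = k <-> fdom f a k x.
Proof.
split=> [[ax <-]|kx]; first exact: fdom_indexP.
by split; [exact: fdom_orbital kx | exact: fdom_index_eq].
Qed.

Lemma fdom_index_lt x y : orbital f a x -> orbital f a y ->
  (x < y -> fdom_index f a x <> fdom_index f a y -> fdom_index f a x < fdom_index f a y) /\
  (fdom_index f a x < fdom_index f a y -> x < y).
Proof.
move=> /fdom_indexP /andP[ix xi] /fdom_indexP /andP[iy yi]; split=> [xy ne|lt_ij].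
  rewrite lt_neqAle; apply/andP; split; first exact/eqP.
  rewrite leNgt; apply/negP => lt_ji.
  have ji1 : fdom_index f a y + 1 <= fdom_index f a x by lia.
  by have := powz_mono ji1; rewrite leNgt (le_lt_trans ix (lt_trans xy yi)).
have ij1 : fdom_index f a x + 1 <= fdom_index f a y by lia.
exact: lt_le_trans xi (le_trans (powz_mono ij1) iy).
Qed.

Lemma fdom_f k x : fdom f a k x -> fdom f a (k + 1) (f x).
Proof.
move=> /andP[kx xk]; apply/andP; split; first by rewrite powzS // inG_le.
by rewrite (powzS hf (k + 1)) inG_lt.
Qed.

End FundamentalDomains.

Lemma finvVK f : inG f -> finv (finv f) =1 f.
Proof. by move=> hf z; apply: (inG_inj (inG_finv hf)); rewrite finvK ?finvKV //; exact: inG_finv. Qed.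

Lemma powz_finv f m x : inG f -> powz (finv f) m x = powz f (- m) x.
Proof.
move=> hf; have hfV := inG_finv hf.
elim/int_rect: m x => [|k IH|k IH] x //.
have -> : - k.+1%:Z = - k%:Z - 1 by lia.
by rewrite powz_pred // IH finvVK // (_ : - (- k%:Z - 1) = - - k%:Z + 1) ?powzS //; lia.
Qed.

Lemma orbital_finv f a : inG f -> orbital (finv f) a = orbital f a.
Proof.
move=> hf; apply/seteqP; split=> x [m [n]]; rewrite ?powz_finv // => mn.
  by exists (- m), (- n).
by exists (- m), (- n); rewrite !powz_finv // !opprK.
Qed.

Lemma fdom_iso f a b k : inG f -> a < f a -> b < f b ->
  order_iso (fdom f a k) (fdom f b k) (powz f k \o interp a (f a) b (f b) \o powz f (- k)).
Proof.
move=> hf af bf; have hpsi := inG_interp af bf.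
apply: order_iso_inG => [|x].
  by apply: inG_comp; [apply: inG_comp => //|]; exact: inG_powz.
rewrite /fdom /=; set y := powz f (- k) x.
have -> : x = powz f k y by rewrite /y powzKN.
rewrite !powzD // !powz1 !powz_le // !powz_lt //.
by rewrite -(inG_le hpsi a y) -(inG_lt hpsi y (f a)) interp_l interp_r.
Qed.

Lemma orbital_conj_up f a b : inG f -> a < f a -> b < f b ->
  exists phi, order_iso (orbital f a) (orbital f b) phi /\
    forall x, orbital f a x -> phi (f x) = f (phi x).
Proof.
move=> hf af bf; pose psi k := powz f k \o interp a (f a) b (f b) \o powz f (- k).
exists (fun x => psi (fdom_index f a x) x); split.
  apply: (order_iso_glue (R := <%R) (q := fdom_index f b)) => [x y ax ay|x y bx dy|k].
  - exact: (fdom_index_lt hf af ax ay).1.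
  - exact: (fdom_index_lt hf bf bx dy).2.
  apply: eq_order_iso (fdom_iso k hf af bf) _ _ _ => // x; apply: iff_sym; exact: fdom_piece.
(* [f] maps the [k]-th fundamental domain onto the next one, where [psi (k + 1) \o f = f \o psi k]. *)
move=> x ax; have kx := fdom_indexP hf af ax.
rewrite (fdom_index_eq hf af (fdom_f hf kx)) /psi /= -(powz1 f x) -powzD //.
by rewrite (_ : - (fdom_index f a x + 1) + 1 = - fdom_index f a x) ?powzS //; lia.
Qed.

Lemma orbitals_conj f a b : inG f -> support f a -> support f b ->
  (a < f a <-> b < f b) ->
  exists phi, order_iso (orbital f a) (orbital f b) phi /\
    forall x, orbital f a x -> phi (f x) = f (phi x).
Proof.
move=> hf sa sb up_ab; case: (pselect (a < f a)) => [af|naf]; first exact/orbital_conj_up/up_ab.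
(* Orbitals on which [f] moves points down are orbitals of [finv f] moving them up. *)
have down c : support f c -> ~ c < f c -> c < finv f c.
  by move=> sc /negP; rewrite -leNgt le_eqVlt => /predU1P[/esym //|fc]; rewrite -(inG_lt hf) finvK.
have [phi [iso conj]] := orbital_conj_up (inG_finv hf) (down a sa naf) (down b sb (naf \o up_ab.2)).
rewrite !orbital_finv // in iso conj; exists phi; split=> // x ax.
have afx : orbital f a (f x) by apply/orbital_fE.
by have := conj _ afx; rewrite finvKV // => ->; rewrite finvK.
Qed.

Lemma convex_trichotomy (O : set rat) x : convex O ->
  [\/ O x, lower O x | upper O x].
Proof.
move=> cO; case: (pselect (O x)) => [Ox|nOx]; first exact: Or31.
case: (pselect (lower O x)) => [lx|nlx]; first exact: Or32.
apply: Or33 => y Oy; rewrite ltNge; apply/negP => xy; apply: nlx => z Oz.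
by rewrite ltNge; apply/negP => zx; exact: nOx (cO _ _ _ Oz Oy zx xy).
Qed.

Lemma lower_convex A : convex (lower A).
Proof. by move=> x y z _ ly _ zy u Au; exact: le_lt_trans zy (ly _ Au). Qed.

Lemma upper_convex A : convex (upper A).
Proof. by move=> x y z ux _ xz _ u Au; exact: lt_le_trans (ux _ Au) xz. Qed.

Lemma gap_convex A B : convex (upper A `&` lower B).
Proof.
by move=> x y z [ux lx] [uy ly] xz zy; split; [exact: upper_convex xz zy | exact: lower_convex xz zy].
Qed.

Lemma lower_nomin A : ~ hasmin (lower A).
Proof.
case=> m [lm mmin]; have : lower A (m - 1) by move=> y Ay; have := lm _ Ay; lra.
by move/mmin; lra.
Qed.

Lemma gap_hasmin A B z : upper A z -> lower B z ->
  hasmin (upper A `&` lower B) <-> hasmin (upper A).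
Proof.
move=> uz lz; split=> [[m [[um lm] mmin]]|[m [um mmin]]].
  exists m; split=> // y uy; case: (pselect (lower B y)) => [ly|nly]; first exact: mmin.
  have [u Bu u_le_y] : exists2 u, B u & u <= y.
    apply: contrapT => nex; apply: nly => u Bu; rewrite ltNge; apply/negP => u_le_y.
    by apply: nex; exists u.
  exact: ltW (lt_le_trans (lm _ Bu) u_le_y).
exists m; split=> [|x [ux _]]; last exact: mmin.
by split=> // y By; exact: le_lt_trans (mmin _ uz) (lz _ By).
Qed.

Lemma gap_hasmax A B z : upper A z -> lower B z ->
  hasmax (upper A `&` lower B) <-> hasmax (lower B).
Proof.
move=> uz lz; split=> [[m [[um lm] mmax]]|[m [lm mmax]]].
  exists m; split=> // y ly; case: (pselect (upper A y)) => [uy|nuy]; first exact: mmax.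
  have [u Au yu] : exists2 u, A u & y <= u.
    apply: contrapT => nex; apply: nuy => u Au; rewrite ltNge; apply/negP => yu.
    by apply: nex; exists u.
  exact: ltW (le_lt_trans yu (um _ Au)).
exists m; split=> [|x [_ lx]]; last exact: mmax.
by split=> // y Ay; exact: lt_le_trans (uz _ Ay) (mmax _ lz).
Qed.

Lemma two_points_sub (A B : set rat) : two_points A -> A `<=` B -> two_points B.
Proof. by move=> [x [y [Ax Ay xy]]] AB; exists x, y; split=> //; exact: AB. Qed.

Lemma orbital_two_points f a : inG f -> support f a -> two_points (orbital f a).
Proof.
move=> hf sa; have [aa afa] := (orbital_refl f a, orbital_f f a).
by case: (ltgtP a (f a)) => [|fa_a|/esym //]; [exists a, (f a) | exists (f a), a].
Qed.

Definition restrict (X : set rat) (f : rat -> rat) (x : rat) : rat :=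
  if pselect (X x) then f x else x.

Lemma restrict_in X f x : X x -> restrict X f x = f x.
Proof. by rewrite /restrict; case: pselect. Qed.

Lemma restrict_out X f x : ~ X x -> restrict X f x = x.
Proof. by rewrite /restrict; case: pselect. Qed.

Lemma restriction_restrict X f : restriction (restrict X f) f.
Proof. by split=> x; rewrite /support /restrict /=; case: pselect. Qed.

Lemma inG_restrict f X : inG f ->
  (forall x y, X x -> orbital f x y -> X y) -> inG (restrict X f).
Proof.
move=> hf Xinv; split=> [x y xy|y].
  rewrite /restrict; case: pselect => Xx; case: pselect => Xy //; first by rewrite inG_lt.
    rewrite ltNge; apply/negP => yfx; apply: Xy; apply: Xinv Xx _.
    exact: orbital_convex (orbital_refl f x) (orbital_f f x) (ltW xy) yfx.
  rewrite ltNge; apply/negP => fyx; apply: Xx; apply: Xinv Xy _.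
  exact: orbital_convex (orbital_f f y) (orbital_refl f y) fyx (ltW xy).
case: (pselect (X y)) => Xy; last by exists y; rewrite restrict_out.
have XVy : X (finv f y) by apply: Xinv Xy _; exact: (orbital_powz f y (-1)).
by exists (finv f y); rewrite restrict_in ?finvK.
Qed.

(* The pieces into which an increasing sequence [T] of convex sets cuts Q. *)
Inductive piece := Below | Orb of nat | Gap of nat | Above.

Definition in_piece (T : nat -> set rat) (P : piece) (x : rat) : Prop :=
  match P with
  | Below => lower (T 0%N) x
  | Orb i => T i x
  | Gap i => (upper (T i) `&` lower (T i.+1)) x
  | Above => forall i, upper (T i) x
  end.

Definition piece_lt (P Q : piece) : Prop :=
  match P, Q with
  | Below, Below => False
  | Below, _ => True
  | Orb i, Orb j => (i < j)%N
  | Orb i, Gap j => (i <= j)%N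
  | Orb _, Above => True
  | Gap i, Orb j => (i < j)%N
  | Gap i, Gap j => (i < j)%N
  | Gap _, Above => True
  | _, _ => False
  end.

Lemma piece_lt_total P Q : P <> Q -> piece_lt P Q \/ piece_lt Q P.
Proof.
case: P => [|i|i|]; case: Q => [|j|j|] //= ne; try by [left | right].
all: try have nij : i <> j by move=> e; apply: ne; rewrite e.
all: lia.
Qed.

Section Pieces.
Variable T : nat -> set rat.
Hypotheses (T_ne : forall i, exists x, T i x) (T_convex : forall i, convex (T i)).
Hypothesis T_below : forall i j, (i < j)%N -> below (T i) (T j).

Lemma lower_mono i j : (i <= j)%N -> lower (T i) `<=` lower (T j).
Proof.
rewrite leq_eqVlt => /predU1P[-> //|ij] x lx y Tjy.
by have [z Tiz] := T_ne i; exact: lt_trans (lx _ Tiz) (T_below ij Tiz Tjy).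
Qed.

Lemma upper_mono i j : (i <= j)%N -> upper (T j) `<=` upper (T i).
Proof.
rewrite leq_eqVlt => /predU1P[-> //|ij] x ux y Tiy.
by have [z Tjz] := T_ne j; exact: lt_trans (T_below ij Tiy Tjz) (ux _ Tjz).
Qed.

Lemma lower_upper_lt i x y : lower (T i) x -> upper (T i) y -> x < y.
Proof. by move=> lx uy; have [z Tz] := T_ne i; exact: lt_trans (lx _ Tz) (uy _ Tz). Qed.

Lemma in_piece_lt P Q x y : in_piece T P x -> in_piece T Q y -> piece_lt P Q -> x < y.
Proof.
case: P => [|i|i|]; case: Q => [|j|j|] //= Px Qy PQ.
- exact: lower_mono (leq0n j) _ Px _ Qy.
- exact: lower_upper_lt (lower_mono (leq0n j) Px) Qy.1.
- exact: lower_upper_lt Px (Qy 0%N).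
- exact: T_below PQ _ _ Px Qy.
- exact: upper_mono PQ _ Qy.1 _ Px.
- exact: Qy i x Px.
- exact: lower_mono PQ _ Px.2 _ Qy.
- exact: lower_upper_lt (lower_mono PQ Px.2) Qy.1.
- exact: lower_upper_lt Px.2 (Qy i.+1).
Qed.

Lemma in_piece_uniq P Q x : in_piece T P x -> in_piece T Q x -> P = Q.
Proof.
move=> Px Qx; apply: contrapT => /piece_lt_total[PQ|QP].
  by have := in_piece_lt Px Qx PQ; rewrite ltxx.
by have := in_piece_lt Qx Px QP; rewrite ltxx.
Qed.

Lemma in_piece_exists x : exists P, in_piece T P x.
Proof.
case: (pselect (forall i, upper (T i) x)) => [ux|nux]; first by exists Above.
have [i nuix] : exists i, ~ upper (T i) x.
  by apply: contrapT => nex; apply: nux => i; apply: contrapT => nuix; apply: nex; exists i.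
have [k /asboolP nukx kmin] := @find_ex_minn (fun i => `[< ~ upper (T i) x >]) (ex_intro _ i (asboolT nuix)).
have [Tkx|lkx|//] := convex_trichotomy x (@T_convex k); first by exists (Orb k).
case: k nukx kmin lkx => [|k] _ kmin lkx; first by exists Below.
exists (Gap k); split=> //; apply: contrapT => nukx.
by have := kmin k (asboolT nukx); rewrite ltnn.
Qed.

Definition piece_of x : piece := epsilon (inhabits Below) (fun P => in_piece T P x).

Lemma piece_ofP x : in_piece T (piece_of x) x.
Proof. by apply: (epsilon_spec (inhabits Below) (fun P => in_piece T P x)); exact: in_piece_exists. Qed.

Lemma piece_of_eq P x : in_piece T P x -> piece_of x = P.
Proof. exact: in_piece_uniq (piece_ofP x). Qed.

End Pieces.

Section Construction.
Variables (f : rat -> rat) (w : nat -> rat).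
Hypotheses (hf : inG f) (w_supp : forall i, support f (w i)).
Hypothesis w_below : forall i j, (i < j)%N -> below (orbital f (w i)) (orbital f (w j)).
Hypothesis w_up : forall i, w i < f (w i) <-> w 0%N < f (w 0%N).
Hypothesis w_lower :
  forall i, hasmax (lower (orbital f (w i))) <-> hasmax (lower (orbital f (w 0%N))).
Hypothesis w_upper :
  forall i, hasmin (upper (orbital f (w i))) <-> hasmin (upper (orbital f (w 0%N))).

Local Notation O i := (orbital f (w i)).
(* The conjugator maps [S i = T i.+1] onto [T i]; the even orbitals keep the gaps wide. *)
Local Notation T := (fun i => O i.*2.+1).
Local Notation S := (fun i => T i.+1).

Let T_ne i : exists x, T i x.
Proof. by exists (w i.*2.+1); exact: orbital_refl. Qed.

Let T_convex i : convex (T i).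
Proof. exact: orbital_convex. Qed.

Let T_below i j : (i < j)%N -> below (T i) (T j).
Proof. by move=> ij; apply: w_below; rewrite ltnS -!muln2 ltn_mul2r. Qed.

Let S_ne i : exists x, S i x.
Proof. exact: T_ne. Qed.

Let S_convex i : convex (S i).
Proof. exact: T_convex. Qed.

Let S_below i j : (i < j)%N -> below (S i) (S j).
Proof. by move=> ij; apply: T_below. Qed.

Let O_between i k j x : (i < k)%N -> (k < j)%N -> O k x -> (upper (O i) `&` lower (O j)) x.
Proof. by move=> ik kj Okx; split=> y Oy; [exact: w_below ik _ _ Oy Okx | exact: w_below kj _ _ Okx Oy]. Qed.

Let below_iso : exists phi, order_iso (in_piece S Below) (in_piece T Below) phi.
Proof.
have lower_O0 k : (0 < k)%N -> O 0%N `<=` lower (O k).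
  by move=> k_gt0 x O0x y Oky; exact: w_below k_gt0 _ _ O0x Oky.
apply: convex_order_iso; try exact: lower_convex.
- exact: two_points_sub (orbital_two_points hf (@w_supp 0%N)) (lower_O0 3%N isT).
- exact: two_points_sub (orbital_two_points hf (@w_supp 0%N)) (lower_O0 1%N isT).
- by split=> /lower_nomin.
- by rewrite /in_piece (w_lower 3%N) (w_lower 1%N).
Qed.

Let orb_iso i : exists phi, order_iso (in_piece S (Orb i)) (in_piece T (Orb i)) phi /\
  forall x, S i x -> phi (f x) = f (phi x).
Proof.
exact: orbitals_conj hf (@w_supp _) (@w_supp _) (iff_trans (w_up _) (iff_sym (w_up _))).
Qed.

Let gap_iso i : exists phi, order_iso (in_piece S (Gap i)) (in_piece T (Gap i)) phi.
Proof.
have gapS x : O i.+1.*2.+2 x -> in_piece S (Gap i) x by apply: O_between; lia.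
have gapT x : O i.+1.*2 x -> in_piece T (Gap i) x by apply: O_between; lia.
have [uzS lzS] := gapS _ (orbital_refl f (w i.+1.*2.+2)).
have [uzT lzT] := gapT _ (orbital_refl f (w i.+1.*2)).
apply: convex_order_iso; try exact: gap_convex.
- exact: two_points_sub (orbital_two_points hf (@w_supp _)) gapS.
- exact: two_points_sub (orbital_two_points hf (@w_supp _)) gapT.
- by rewrite (gap_hasmin uzS lzS) (gap_hasmin uzT lzT) !w_upper.
- by rewrite (gap_hasmax uzS lzS) (gap_hasmax uzT lzT) !w_lower.
Qed.

Let above_iso : order_iso (in_piece S Above) (in_piece T Above) id.
Proof.
split=> // [x uSx k|y uTy]; last by exists y => // k; exact: uTy k.+1.
exact: (upper_mono T_ne T_below (leqnSn k) (uSx k)).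
Qed.

Let piece_conj (P : piece) (phi : rat -> rat) :=
  order_iso (in_piece S P) (in_piece T P) phi /\
  forall i x, P = Orb i -> S i x -> phi (f x) = f (phi x).

Let piece_conj_exists P : exists phi, piece_conj P phi.
Proof.
case: P => [|i|i|].
- by have [phi iso] := below_iso; exists phi.
- by have [phi [iso fphi]] := orb_iso i; exists phi; split=> // _ x [<-]; exact: fphi.
- by have [phi iso] := gap_iso i; exists phi.
- by exists id; split=> //; exact: above_iso.
Qed.

Let conj_on P : rat -> rat := epsilon (inhabits id) (piece_conj P).

Let conj_onP P : piece_conj P (conj_on P).
Proof. exact: epsilon_spec (piece_conj_exists P). Qed.

Let h x := conj_on (piece_of S x) x.

Let inG_h : inG h.
Proof.
apply: order_isoT_inG; apply: (order_iso_glue (R := piece_lt) (q := piece_of T)).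
- move=> x y _ _ xy /piece_lt_total[] // yx.
  have := in_piece_lt S_ne S_below (piece_ofP S_convex y) (piece_ofP S_convex x) yx.
  by rewrite ltNge (ltW xy).
- move=> u v _ _; exact: (in_piece_lt T_ne T_below (piece_ofP T_convex u) (piece_ofP T_convex v)).
move=> P; apply: eq_order_iso (conj_onP P).1 _ _ _ => // x.
  by split=> [Px|[_ <-]]; [split=> //; exact: piece_of_eq | exact: piece_ofP].
by split=> [Px|[_ <-]]; [split=> //; exact: piece_of_eq | exact: piece_ofP].
Qed.

Let g := restrict [set x | exists i, T i x] f.
Let g1 := restrict (T 0%N) f.
Let g2 := restrict [set x | exists i, S i x] f.

Let T_orbital i x y : T i x -> orbital f x y -> T i y.
Proof. exact: orbital_trans. Qed.

Let inG_g : inG g.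
Proof. by apply: inG_restrict => // x y [i Tix] xy; exists i; exact: T_orbital xy. Qed.

Let inG_g1 : inG g1.
Proof. by apply: inG_restrict => // x y; exact: T_orbital. Qed.

Let inG_g2 : inG g2.
Proof. by apply: inG_restrict => // x y [i Six] xy; exists i; exact: T_orbital xy. Qed.

Let g_factor x : g x = g1 (g2 x).
Proof.
case: (pselect (exists i, S i x)) => [[j Sjx]|nSx].
  have nT0fx : ~ T 0%N (f x).
    move=> T0fx; have Sjfx : S j (f x) by apply/orbital_fE.
    by have := T_below (ltn0Sn j) T0fx Sjfx; rewrite ltxx.
  have g2x : g2 x = f x by rewrite /g2 restrict_in //; exists j.
  by rewrite g2x /g1 restrict_out // /g restrict_in //; exists j.+1.
rewrite /g2 restrict_out //; case: (pselect (T 0%N x)) => T0x.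
  by rewrite /g1 /g !restrict_in //; exists 0%N.
by rewrite /g1 /g !restrict_out // => -[[|j] Tjx] //; apply: nSx; exists j.
Qed.

Let h_conj x : g (h x) = h (g2 x).
Proof.
have hx := (conj_onP (piece_of S x)).1.
have Thx : in_piece T (piece_of S x) (h x) by have [_ into _] := hx; exact: into (piece_ofP S_convex x).
case: (pselect (exists i, piece_of S x = Orb i)) => [[i Px]|nPx].
  have Six : S i x by move: (piece_ofP S_convex x); rewrite Px.
  have Pfx : piece_of S (f x) = Orb i.
    by apply: (piece_of_eq S_ne S_convex S_below); apply/orbital_fE.
  rewrite /g2 restrict_in; last by exists i.
  rewrite /g restrict_in; last by exists i; move: Thx; rewrite Px.
  by rewrite /h Pfx Px ((conj_onP (Orb i)).2 i x erefl Six).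
have nSx : ~ exists i, S i x.
  by case=> i Six; apply: nPx; exists i; exact: (@piece_of_eq S S_ne S_convex S_below (Orb i) x Six).
have nThx : ~ exists i, T i (h x).
  by case=> i Tihx; apply: nPx; exists i; exact: (@in_piece_uniq T T_ne T_below _ (Orb i) _ Thx Tihx).
by rewrite /g2 /g !restrict_out.
Qed.

Let g1_support x : support g1 x -> T 0%N x.
Proof. by move=> sx; apply: contrapT => nT0x; apply: sx; rewrite /g1 restrict_out. Qed.

Let g1_g x : T 0%N x -> g1 x = g x.
Proof. by move=> T0x; rewrite /g1 /g !restrict_in //; exists 0%N. Qed.

Let bump_g1 : is_bump g1.
Proof.
have T0w1 : T 0%N (w 1%N) by exact: orbital_refl.
have s1 : support g1 (w 1%N) by rewrite /support /= /g1 restrict_in //; exact: w_supp.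
have g1_orbital a : support g1 a -> orbital g1 a = T 0%N.
  move=> sa; have T0a := g1_support sa.
  by rewrite (restriction_orbital hf inG_g1 (restriction_restrict _ _) sa) -(orbital_eq hf T0a).
split; [exact: inG_g1 | split; [by exists (w 1%N) | exists (T 0%N); split]].
  by apply/(nontrivial_orbitalsP inG_g1); exists (w 1%N); rewrite ?g1_orbital.
by move=> O' /(nontrivial_orbitalsP inG_g1) [a sa ->]; exact: g1_orbital.
Qed.

Lemma increasing_orbitals_decomposable : bump_decomposable f.
Proof.
exists g, g1, g2; split; [exact: inG_g | exact: inG_g1 | exact: inG_g2 | exact: restriction_restrict |].
split; [exact: bump_g1 | | exact: funext g_factor | by exists h; split; [exact: inG_h | exact: funext h_conj]].
split; [exact: bump_g1 | split=> x sx; have T0x := g1_support sx; last exact: g1_g].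
by rewrite /support /= -g1_g.
Qed.

End Construction.

Lemma constant_subseq (P : nat -> Prop) : exists s : nat -> nat,
  (forall i, (s i < s i.+1)%N) /\ ((forall i, P (s i)) \/ (forall i, ~ P (s i))).
Proof.
case: (pselect (forall N, exists2 n, (N <= n)%N & P n)) => [infP|].
  pose next n := epsilon (inhabits 0%N) (fun m => (n < m)%N /\ P m).
  have nextP n : (n < next n)%N /\ P (next n).
    by apply: (epsilon_spec (inhabits 0%N) (fun m => (n < m)%N /\ P m)); have [m] := infP n.+1; exists m.
  by exists (fun i => iter i.+1 next 0%N); split=> [i|]; [exact: (nextP _).1 | left=> i; exact: (nextP _).2].
move=> /existsNP [N notP]; exists (addn N); split=> [i|]; first by rewrite addnS.
by right=> i Pi; apply: notP; exists (N + i)%N; rewrite ?leq_addr.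
Qed.

Section MonotoneSubsequence.
Variable rel : nat -> nat -> Prop.
Hypothesis rel_total : forall n m, n <> m -> rel n m \/ rel m n.
Hypothesis rel_trans : forall m n p, rel n m -> rel m p -> rel n p.

Let bounded n := exists N, forall m, (N <= m)%N -> ~ rel n m.

Let decreasing_subseq : (forall N, exists2 n, (N <= n)%N & bounded n) ->
  exists s : nat -> nat, (forall i, (s i < s i.+1)%N) /\
    forall i j, (i < j)%N -> rel (s j) (s i).
Proof.
move=> infB; pose P n m := [/\ (n < m)%N, bounded m & rel m n].
have nextP n : bounded n -> P n (epsilon (inhabits 0%N) (P n)).
  move=> [N nN]; apply: epsilon_spec; have [m Nm Bm] := infB (maxn N n.+1).
  rewrite geq_max in Nm; case/andP: Nm => Nm nm; exists m; split=> //.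
  have n_neq_m : n <> m by move=> e; move: nm; rewrite e ltnn.
  by case: (rel_total n_neq_m) => // /(nN _ Nm).
have [n0 _ Bn0] := infB 0%N; pose s i := iter i (fun n => epsilon (inhabits 0%N) (P n)) n0.
have Bs i : bounded (s i) by elim: i => [|i IH] //; have [] := nextP _ IH.
exists s; split=> [i|]; first by have [] := nextP _ (Bs i).
apply: (homo_ltn (r := fun i j => rel j i)) => [j i k ij jk|i]; first exact: rel_trans ij.
by have [] := nextP _ (Bs i).
Qed.

Let increasing_subseq : (exists N, forall n, (N <= n)%N -> ~ bounded n) ->
  exists s : nat -> nat, (forall i, (s i < s i.+1)%N) /\
    forall i j, (i < j)%N -> rel (s i) (s j).
Proof.
move=> [N unB]; pose P n m := (n < m)%N /\ rel n m.
have nextP n : (N <= n)%N -> P n (epsilon (inhabits 0%N) (P n)).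
  move=> Nn; apply: epsilon_spec; apply: contrapT => noP; apply: (unB n Nn).
  by exists n.+1 => m nm r; apply: noP; exists m.
pose s i := iter i (fun n => epsilon (inhabits 0%N) (P n)) N.
have Ns i : (N <= s i)%N.
  by elim: i => [|i IH] //; apply: leq_trans IH (ltnW (nextP _ IH).1).
exists s; split=> [i|]; first exact: (nextP _ (Ns i)).1.
by apply: homo_ltn => [j i k|i]; [exact: rel_trans | exact: (nextP _ (Ns i)).2].
Qed.

Lemma monotone_subseq : exists s : nat -> nat, (forall i, (s i < s i.+1)%N) /\
  ((forall i j, (i < j)%N -> rel (s i) (s j)) \/ (forall i j, (i < j)%N -> rel (s j) (s i))).
Proof.
case: (pselect (forall N, exists2 n, (N <= n)%N & bounded n)) => [infB|].
  by have [s [s_incr dec]] := decreasing_subseq infB; exists s; split=> //; right.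
move=> /existsNP [N finB]; have [|s [s_incr inc]] := increasing_subseq.
  by exists N => n Nn Bn; apply: finB; exists n.
by exists s; split=> //; left.
Qed.

End MonotoneSubsequence.

Definition orbital_chain (f : rat -> rat) (t : nat -> rat) :=
  (forall i, support f (t i)) /\
  forall i j, (i < j)%N -> below (orbital f (t i)) (orbital f (t j)).

Definition uniform (F : rat -> Prop) (t : nat -> rat) := forall i, F (t i) <-> F (t 0%N).

Lemma orbital_chain_subseq f t s : orbital_chain f t ->
  (forall i, (s i < s i.+1)%N) -> orbital_chain f (t \o s).
Proof.
move=> [supp chain] s_incr; split=> [i|i j ij]; [exact: supp | apply: chain].
exact: homo_ltn ltn_trans s_incr _ _ ij.
Qed.

Lemma uniform_subseq F t s : uniform F t -> uniform F (t \o s).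
Proof. by move=> uF i; exact: iff_trans (uF (s i)) (iff_sym (uF (s 0%N))). Qed.

Lemma uniformize F t : exists s : nat -> nat,
  (forall i, (s i < s i.+1)%N) /\ uniform F (t \o s).
Proof.
have [s [s_incr [allF|noF]]] := constant_subseq (fun i => F (t i)).
  by exists s; split=> // i; split=> _; exact: allF.
by exists s; split=> // i; split=> /= [/noF|/noF] [].
Qed.

Lemma uniformize_chain f (F1 F2 F3 : rat -> Prop) t : orbital_chain f t ->
  exists t', [/\ orbital_chain f t', uniform F1 t', uniform F2 t' & uniform F3 t'].
Proof.
move=> chain; have [s1 [s1_incr u1]] := uniformize F1 t.
have [s2 [s2_incr u2]] := uniformize F2 (t \o s1).
have [s3 [s3_incr u3]] := uniformize F3 (t \o s1 \o s2).
exists (t \o s1 \o s2 \o s3); split=> //; [|exact: uniform_subseq s3 (uniform_subseq s2 u1) | exact: uniform_subseq s3 u2].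
apply: orbital_chain_subseq s3_incr; apply: orbital_chain_subseq s2_incr.
exact: orbital_chain_subseq s1_incr.
Qed.

Lemma orbital_chain_decomposable f t : inG f -> orbital_chain f t -> bump_decomposable f.
Proof.
move=> hf chain.
have [w [[w_supp w_below] w_up w_lower w_upper]] := uniformize_chain (fun a => a < f a)
  (fun a => hasmax (lower (orbital f a))) (fun a => hasmin (upper (orbital f a))) chain.
exact: increasing_orbitals_decomposable hf w_supp w_below w_up w_lower w_upper.
Qed.

Definition mirror (f : rat -> rat) (x : rat) : rat := - f (- x).

Lemma mirrorK f : mirror (mirror f) = f.
Proof. by apply: funext => x; rewrite /mirror !opprK. Qed.

Lemma inG_mirror f : inG f -> inG (mirror f).
Proof.
move=> hf; split=> [x y xy|y]; first by rewrite /mirror ltrN2 inG_lt // ltrN2.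
by exists (- finv f (- y)); rewrite /mirror opprK finvK // opprK.
Qed.

Lemma support_mirror f x : support (mirror f) x <-> support f (- x).
Proof.
rewrite /support /mirror /=; split=> ne e; apply: ne; first by rewrite e opprK.
by apply/eqP; rewrite -eqr_oppLR e.
Qed.

Lemma orbital_mirror f a x : inG f -> orbital (mirror f) a x <-> orbital f (- a) (- x).
Proof.
move=> hf; have E m : powz (mirror f) m a = - powz f m (- a).
  by rewrite -[in LHS](opprK a); apply: powz_conj (inG_mirror hf) hf _ => y; rewrite /mirror opprK.
by split=> -[m [n]]; rewrite ?E => -[mx xn]; exists n, m; rewrite ?E; split; lra.
Qed.

Lemma nontrivial_orbitals_mirror g O : inG g ->
  nontrivial_orbitals (mirror g) O <-> nontrivial_orbitals g (mirror_set O).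
Proof.
move=> hg; have hgm := inG_mirror hg.
have E a : mirror_set (orbital (mirror g) a) = orbital g (- a).
  by apply/seteqP; split=> x; rewrite /mirror_set /= orbital_mirror // opprK.
split=> [/(nontrivial_orbitalsP hgm) [a sa ->]|/(nontrivial_orbitalsP hg) [b sb eO]].
  by apply/(nontrivial_orbitalsP hg); exists (- a); rewrite ?E //; exact/support_mirror.
apply/(nontrivial_orbitalsP hgm); exists (- b); first by apply/support_mirror; rewrite opprK.
have := E (- b); rewrite opprK -(mirror_setK O) eO => <-.
by rewrite mirror_setK.
Qed.

Lemma bump_mirror g : is_bump g -> is_bump (mirror g).
Proof.
case=> hg [[x0 gx0] [O1 [NO1 uniqO1]]]; split; first exact: inG_mirror.
split; first by exists (- x0); apply/support_mirror; rewrite opprK.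
exists (mirror_set O1); split; first by apply/nontrivial_orbitals_mirror; rewrite ?mirror_setK.
by move=> O /(nontrivial_orbitals_mirror _ hg) /uniqO1 <-; rewrite mirror_setK.
Qed.

Lemma agree_mirror g f : support g `<=` support f -> (forall x, support g x -> g x = f x) ->
  support (mirror g) `<=` support (mirror f) /\
  forall x, support (mirror g) x -> mirror g x = mirror f x.
Proof.
move=> sgf gf; split=> x /support_mirror sx; first exact/support_mirror/sgf.
by rewrite /mirror gf.
Qed.

Lemma decomposable_mirror f : bump_decomposable (mirror f) -> bump_decomposable f.
Proof.
case=> g [g1 [g2 [hg hg1 hg2 [sgf gf] [bump [_ [sg1g g1g]] gE [h [hh hc]]]]]].
exists (mirror g), (mirror g1), (mirror g2); split; try exact: inG_mirror.
  by rewrite -(mirrorK f); exact: agree_mirror.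
split; [exact: bump_mirror | split; [exact: bump_mirror | exact: agree_mirror] | |].
  by apply: funext => x; rewrite /mirror gE opprK.
exists (mirror h); split; first exact: inG_mirror.
by apply: funext => x; rewrite /mirror /= !opprK; have := congr1 (fun F => F (- x)) hc => /= ->.
Qed.

Lemma infinite_orbital_chain f : inG f -> ~ finite_set (nontrivial_orbitals f) ->
  exists t, orbital_chain f t \/ orbital_chain (mirror f) t.
Proof.
move=> hf /infiniteP /pcard_leP [F].
have FNO n : nontrivial_orbitals f (F n) by exact: (@funS _ _ _ _ F n I).
have F_inj n m : F n = F m -> n = m by exact: (@inj _ _ _ F n m (mem_set I) (mem_set I)).
pose P n a := support f a /\ F n = orbital f a; pose r n := epsilon (inhabits 0) (P n).
have rP n : P n (r n).
  by apply: (epsilon_spec (inhabits 0) (P n)); have /(nontrivial_orbitalsP hf) [a] := FNO n; exists a.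
pose rel n m := below (orbital f (r n)) (orbital f (r m)).
have [||s [s_incr [inc|dec]]] := @monotone_subseq rel.
- move=> n m nm; apply: orbital_total => // e; apply: nm; apply: F_inj.
  by rewrite (rP n).2 (rP m).2.
- by move=> m n p nm mp x y nx py; exact: lt_trans (nm _ _ nx (orbital_refl _ _)) (mp _ _ (orbital_refl _ _) py).
- by exists (r \o s); left; split=> [i|]; [exact: (rP _).1 | exact: inc].
exists (fun i => - r (s i)); right; split=> [i|i j ij x y].
  by apply/support_mirror; rewrite opprK; exact: (rP _).1.
rewrite !orbital_mirror // !opprK => ix jy.
by rewrite -ltrN2; exact: dec i j ij _ _ jy ix.
Qed.

Lemma infinite_decomposable f :
  inG f -> ~ finite_set (nontrivial_orbitals f) -> bump_decomposable f.
Proof.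
move=> hf /(infinite_orbital_chain hf) [t [chain|chain]].
  exact: orbital_chain_decomposable hf chain.
exact/decomposable_mirror/(orbital_chain_decomposable (inG_mirror hf) chain).
Qed.

Theorem corollary2p3 (f : rat -> rat) (hf : inG f) :
  ~ (exists g g1 g2 : rat -> rat,
        [/\ inG g, inG g1, inG g2, restriction g f &
         [/\ is_bump g1, orbital_of g1 g, g = (fun x => g1 (g2 x)) & conjugate_in_G g g2]])
  <-> finite_set (nontrivial_orbitals f).
Proof.
split=> [not_dec|fin dec]; last exact: bump_decomposable_infinite hf dec fin.
by apply: contrapT => infin; apply: not_dec; exact: infinite_decomposable.
Qed.
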